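(* Let $P=\{(x,y)\in\mathbb{R}^{p+q}:Ax+Gy\le b\}$ be a nonempty rational polyhedron, let $c\in\mathbb{Q}^p$, $h\in\mathbb{Q}^q$ be such that $cx+hy$ is bounded above on $P$, and let $\gamma^*\in\mathbb{Q}$ be such that $cx+hy\le\gamma^*$ is valid for $P_I$ but not valid for $P$. With $Q$ and $\{v^r\}_{r\in R}$ as below, define for $r\in R$ $$d^r:=v^r_{1..m}A-v^r_{m+1}c,\qquad \delta^r:=\lceil v^r_{1..m}b-v^r_{m+1}\gamma^*\rceil,$$ for $r$ with $v^r_{m+1}>0$ put $\gamma^r:=\dfrac{\delta^r-v^r_{1..m}b}{-v^r_{m+1}}$, and let $\widehat\gamma:=\max\{\gamma^r:r\in R,\ v^r_{m+1}>0\}$ (this index set is nonempty). Then $cx+hy\le\widehat\gamma$ is a cutting plane for $P$, i.e. it is valid for $P_I$ and not valid for $P$.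
   Context: $A\in\mathbb{Q}^{m\times p}$, $G\in\mathbb{Q}^{m\times q}$, $b\in\mathbb{Q}^m$; $P_I=\mathrm{conv}\{(x,y)\in P:x\in\mathbb{Z}^p\}$. $Q=\{v=(v_{1..m},v_{m+1})\in\mathbb{R}^{m+1}: v_{1..m}G-v_{m+1}h=0,\ v\ge0\}$ (with $v_{1..m}$ a row vector in $\mathbb{R}^m$), and $\{v^r\}_{r\in R}$ ($R$ finite) contains exactly one representative of each extreme ray of $Q$, each scaled so that $v^r_{1..m}A-v^r_{m+1}c\in\mathbb{Z}^p$. *)

(* The ambient ordered field is an arbitrary archimedean real
   field R (e.g. the reals embed here; rat is an instance); data are rational
   matrices embedded via ratr. *)
From HB Require Import structures.
From mathcomp Require Import all_boot all_order all_algebra.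
Set Implicit Arguments. Unset Strict Implicit. Unset Printing Implicit Defensive.
Import Order.TTheory GRing.Theory Num.Theory.
Local Open Scope ring_scope.

Definition ratmx (R : archiRealFieldType) (m n : nat) (M : 'M[rat]_(m, n)) : 'M[R]_(m, n) :=
  map_mx ratr M.
Arguments ratmx {R m n} M.

Definition inP (R : archiRealFieldType) (m p q : nat)
  (A : 'M[rat]_(m, p)) (G : 'M[rat]_(m, q)) (b : 'cV[rat]_m)
  (z : 'cV[R]_p * 'cV[R]_q) : Prop :=
  forall i : 'I_m, (ratmx A *m z.1 + ratmx G *m z.2) i 0 <= ratr (b i 0).

Definition inPZ (R : archiRealFieldType) (m p q : nat)
  (A : 'M[rat]_(m, p)) (G : 'M[rat]_(m, q)) (b : 'cV[rat]_m)
  (z : 'cV[R]_p * 'cV[R]_q) : Prop :=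
  inP A G b z /\ forall j : 'I_p, z.1 j 0 \is a Num.int.

Definition conv (R : archiRealFieldType) (p q : nat)
  (S : 'cV[R]_p * 'cV[R]_q -> Prop) (z : 'cV[R]_p * 'cV[R]_q) : Prop :=
  exists (n : nat) (pts : 'I_n -> 'cV[R]_p * 'cV[R]_q) (lam : 'I_n -> R),
    (forall k, S (pts k)) /\ (forall k, 0 <= lam k) /\ \sum_k lam k = 1 /\
    z.1 = \sum_k lam k *: (pts k).1 /\ z.2 = \sum_k lam k *: (pts k).2.

Definition inPI (R : archiRealFieldType) (m p q : nat)
  (A : 'M[rat]_(m, p)) (G : 'M[rat]_(m, q)) (b : 'cV[rat]_m)
  (z : 'cV[R]_p * 'cV[R]_q) : Prop :=
  conv (inPZ A G b) z.

Definition obj (R : archiRealFieldType) (p q : nat)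
  (c : 'rV[rat]_p) (h : 'rV[rat]_q) (z : 'cV[R]_p * 'cV[R]_q) : R :=
  (ratmx c *m z.1) 0 0 + (ratmx h *m z.2) 0 0.

Definition valid (R : archiRealFieldType) (p q : nat)
  (S : 'cV[R]_p * 'cV[R]_q -> Prop) (c : 'rV[rat]_p) (h : 'rV[rat]_q) (g : R) : Prop :=
  forall z, S z -> obj c h z <= g.

(* Q = {v = (v_{1..m}, v_{m+1}) : v_{1..m} G - v_{m+1} h = 0, v >= 0} *)
Definition inQ (R : archiRealFieldType) (m q : nat)
  (G : 'M[rat]_(m, q)) (h : 'rV[rat]_q) (v : 'rV[R]_m * R) : Prop :=
  v.1 *m ratmx G - v.2 *: ratmx h = 0 /\ (forall i, 0 <= v.1 0 i) /\ 0 <= v.2.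

Definition extreme_ray_gen (R : archiRealFieldType) (m : nat)
  (K : 'rV[R]_m * R -> Prop) (v : 'rV[R]_m * R) : Prop :=
  K v /\ v <> (0, 0) /\
  forall u w, K u -> K w -> u.1 + w.1 = v.1 -> u.2 + w.2 = v.2 ->
    exists lam : R, 0 <= lam /\ u.1 = lam *: v.1 /\ u.2 = lam * v.2.

Definition same_ray (R : archiRealFieldType) (m : nat) (v w : 'rV[R]_m * R) : Prop :=
  exists lam : R, 0 < lam /\ w.1 = lam *: v.1 /\ w.2 = lam * v.2.

Definition dvec (R : archiRealFieldType) (m p : nat)
  (A : 'M[rat]_(m, p)) (c : 'rV[rat]_p) (v : 'rV[R]_m * R) : 'rV[R]_p :=
  v.1 *m ratmx A - v.2 *: ratmx c.

Definition delta (R : archiRealFieldType) (m : nat)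
  (b : 'cV[rat]_m) (gs : rat) (v : 'rV[R]_m * R) : R :=
  (Num.ceil ((v.1 *m ratmx b) 0 0 - v.2 * ratr gs))%:~R.

Definition gammar (R : archiRealFieldType) (m : nat)
  (b : 'cV[rat]_m) (gs : rat) (v : 'rV[R]_m * R) : R :=
  (delta b gs v - (v.1 *m ratmx b) 0 0) / (- v.2).

From HB Require Import structures.
From mathcomp Require Import all_boot all_order all_algebra lra.
From Stdlib Require Import Classical.
Import Order.TTheory GRing.Theory Num.Theory.
Local Open Scope ring_scope.
Set Implicit Arguments. Unset Strict Implicit. Unset Printing Implicit Defensive.

(* Since c x + h y is bounded on the nonempty P, LP duality gives a
   point (v, 1) of Q; decomposing it into the extreme-ray generators v^r
   shows that some v^r_{m+1} > 0, so gamma-hat is well defined.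
   Now fix a mixed-integer point (x, y) of P. On the slice of P above x,
   c x + h y <= gamma* is valid, so LP duality gives v >= 0 with v G = h and
   v (b - A x) <= gamma* - c x; thus (v, 1) lies in Q. Writing (v, 1) as a
   nonnegative combination of the extreme-ray generators v^r, some v^r with
   v^r_{m+1} > 0 inherits the inequality, i.e. d^r x >= v^r b - v^r_{m+1}
   gamma*. As d^r x is an integer, d^r x >= delta^r, and weak duality on the
   slice turns this into c x + h y <= gamma^r <= gamma-hat. Validity passes
   to the convex hull P_I; and gamma^r <= gamma* makes the cut invalid for P. *)

Section Farkas.
Variable R : realFieldType.

Definition dot n (u : 'rV[R]_n) (z : 'cV[R]_n) : R := (u *m z) 0 0.

Lemma dotZ n a (u : 'rV[R]_n) z : dot (a *: u) z = a * dot u z.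
Proof. by rewrite /dot -scalemxAl mxE. Qed.
Lemma dotB n (u v : 'rV[R]_n) z : dot (u - v) z = dot u z - dot v z.
Proof. by rewrite /dot mulmxBl !mxE. Qed.
Lemma dotDr n (u : 'rV[R]_n) z z' : dot u (z + z') = dot u z + dot u z'.
Proof. by rewrite /dot mulmxDr mxE. Qed.
Lemma dotZr n a (u : 'rV[R]_n) z : dot u (a *: z) = a * dot u z.
Proof. by rewrite /dot -scalemxAr mxE. Qed.
Lemma dotBr n (u : 'rV[R]_n) z z' : dot u (z - z') = dot u z - dot u z'.
Proof. by rewrite /dot mulmxBr !mxE. Qed.

(* [incone s w]: w is a nonnegative combination of the vectors of s,
   peeling the generators off one at a time. *)
Fixpoint incone n (s : seq 'rV[R]_n) (w : 'rV[R]_n) : Prop :=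
  if s is a :: s' then exists t, 0 <= t /\ incone s' (w - t *: a) else w = 0.

Lemma incone_proj n (s : seq 'rV[R]_n) (a : 'rV_n) (z : 'cV_n) w :
  (forall u, u \in s -> dot u z <= 0) ->
  incone [seq u - dot u z *: a | u <- s] w ->
  exists be, be <= 0 /\ incone s (w + be *: a).
Proof.
elim: s w => [|u s IH] w s_le0 /=; first by move=> ->; exists 0; rewrite scale0r addr0.
case=> t [t_ge0 w_proj].
have [be [be_le0 w_shift]] := IH _ (fun v vs => s_le0 v (mem_behead (s:=u :: s) vs)) w_proj.
exists (be + t * dot u z); split.
  by rewrite -(addr0 0) lerD // mulr_ge0_le0 // s_le0 ?mem_head.
exists t; split => //.
suff -> : w + (be + t * dot u z) *: a - t *: u =
          w - t *: (u - dot u z *: a) + be *: a by [].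
rewrite scalerBr scalerA opprB scalerDl.
by rewrite [be *: a + _]addrC !addrA (addrAC (w + _) (be *: a)).
Qed.

Lemma dot_self_gt0 n (w : 'rV[R]_n) : w != 0 -> 0 < dot w w^T.
Proof.
move=> /eqP w_neq0; have [j wj_neq0] : exists j, w 0 j != 0.
  apply/existsP; apply: contra_notT w_neq0 => /existsPn wj0.
  by apply/rowP => j; rewrite mxE; apply/eqP/negPn.
rewrite /dot mxE (bigD1 j) //= ltr_pwDl //.
- by rewrite mxE -expr2 lt_def sqrf_eq0 wj_neq0 sqr_ge0.
- by apply: sumr_ge0 => i _; rewrite mxE -expr2 sqr_ge0.
Qed.

(* Farkas' lemma for finitely generated cones: a vector outside the cone
   spanned by s is strictly separated from it by a hyperplane through 0.
   By induction on the number of generators; when the first generator a is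
   not already separated, the problem is projected along a. *)
Lemma farkas n (s : seq 'rV[R]_n) w : ~ incone s w ->
  exists z, (forall u, u \in s -> dot u z <= 0) /\ 0 < dot w z.
Proof.
move size_k : (size s) => k; elim: k n s w size_k => [|k IH] n [|a s] w //=.
  by move=> _ w_neq0; exists w^T; split => //; apply/dot_self_gt0/eqP.
move=> [size_s] w_out.
have w_out_s : ~ incone s w.
  by move=> w_in; apply: w_out; exists 0; rewrite scale0r subr0.
have [z [z_s w_z]] := IH _ _ _ size_s w_out_s.
have [a_z | a_z] := lerP (dot a z) 0.
  by exists z; split => // u; rewrite inE => /predU1P [-> | /z_s].
have [z1 [a_z1 z1_s w_z1]] : exists z1, [/\ dot a z1 = 1,
    forall u, u \in s -> dot u z1 <= 0 & 0 < dot w z1].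
  exists ((dot a z)^-1 *: z); split; rewrite ?dotZr ?mulVf ?gt_eqF //.
  - by move=> u us; rewrite dotZr mulr_ge0_le0 ?z_s // invr_ge0 ltW.
  - by rewrite mulr_gt0 ?invr_gt0.
pose s' := [seq u - dot u z1 *: a | u <- s].
pose w' := w - dot w z1 *: a.
have w'_out : ~ incone s' w'.
  move=> /(incone_proj z1_s) [be [be_le0 w_shift]]; apply: w_out.
  exists (dot w z1 - be); split; first by rewrite subr_ge0 (le_trans be_le0) // ltW.
  by rewrite scalerBl opprB addrA addrAC.
have [|z' [z'_s w'_z']] := IH _ s' w' _ w'_out; first by rewrite size_map.
exists (z' - dot a z' *: z1); split.
  move=> u; rewrite inE => /predU1P [-> | us].
    by rewrite dotBr dotZr a_z1 mulr1 subrr.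
  by have := z'_s _ (map_f _ us); rewrite dotB dotZ dotBr dotZr [dot a z' * _]mulrC.
by move: w'_z'; rewrite dotB dotZ dotBr dotZr [dot a z' * _]mulrC.
Qed.

Lemma incone_rows k n (M : 'M[R]_(k, n)) (l : seq 'I_k) w : uniq l ->
  incone [seq row i M | i <- l] w ->
  exists mu : 'I_k -> R, (forall i, 0 <= mu i) /\ w = \sum_(i <- l) mu i *: row i M.
Proof.
elim: l w => [|i l IH] w /=.
  by move=> _ ->; exists (fun _ => 0); split => //; rewrite big_nil.
case/andP=> i_notin_l uniq_l [t [t_ge0 /(IH _ uniq_l) [mu [mu_ge0 w_eq]]]].
exists (fun j => if j == i then t else mu j); split; first by move=> j; case: eqP.
rewrite big_cons eqxx (eq_big_seq (fun j => mu j *: row j M)); last first.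
  by move=> j jl; case: eqP => // ji; move: i_notin_l; rewrite -ji jl.
by rewrite -w_eq addrC subrK.
Qed.

Lemma farkas_mx k n (M : 'M[R]_(k, n)) (w : 'rV_n) :
  (forall z : 'cV_n, (forall i, (M *m z) i 0 <= 0) -> dot w z <= 0) ->
  exists v : 'rV_k, (forall i, 0 <= v 0 i) /\ v *m M = w.
Proof.
move=> w_dual.
have [w_in | w_out] := classic (incone [seq row i M | i <- index_enum 'I_k] w).
  have [mu [mu_ge0 ->]] := incone_rows (index_enum_uniq _) w_in.
  exists (\row_i mu i); split; first by move=> i; rewrite mxE.
  by rewrite mulmx_sum_row; apply: eq_bigr => i _; rewrite mxE.
have [z [z_rows w_z]] := farkas w_out.
suff : dot w z <= 0 by rewrite leNgt w_z.
apply: w_dual => i; have := z_rows (row i M) (map_f _ (mem_index_enum i)).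
by rewrite /dot -row_mul mxE.
Qed.

End Farkas.

Section LPDuality.
Variable R : realFieldType.

Definition in_poly m q (Gm : 'M[R]_(m, q)) (be : 'cV[R]_m) (y : 'cV[R]_q) : Prop :=
  forall i, (Gm *m y) i 0 <= be i 0.

Variables (m q : nat) (Gm : 'M[R]_(m, q)) (be : 'cV[R]_m) (hv : 'rV[R]_q) (al : R).
Hypothesis poly_nonempty : exists yb, in_poly Gm be yb.
Hypothesis hv_bounded : forall y, in_poly Gm be y -> dot hv y <= al.

Lemma recession_bounded y : (forall i, (Gm *m y) i 0 <= 0) -> dot hv y <= 0.
Proof.
move=> y_rec; have [yb yb_in] := poly_nonempty.
rewrite leNgt; apply/negP => hy_gt0.
pose s := (al - dot hv yb + 1) / dot hv y.
have s_ge0 : 0 <= s.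
  by apply: divr_ge0; [have := hv_bounded yb_in; lra | exact: ltW].
have : in_poly Gm be (yb + s *: y).
  move=> i; rewrite mulmxDr -scalemxAr mxE [X in _ + X]mxE -[be i 0]addr0.
  by rewrite lerD // mulr_ge0_le0.
by move=> /hv_bounded; rewrite dotDr dotZr divfK ?gt_eqF //; lra.
Qed.

Lemma homogenized_bound y t : t <= 0 -> (forall i, (Gm *m y) i 0 + t * be i 0 <= 0) ->
  dot hv y + t * al <= 0.
Proof.
move=> t_le0 y_t; have [t_lt0 | t_ge0] := ltrP t 0.
  have : in_poly Gm be ((- t)^-1 *: y).
    move=> i; rewrite -scalemxAr mxE ler_pdivrMl ?oppr_gt0 //.
    by have := y_t i; lra.
  by move=> /hv_bounded; rewrite dotZr ler_pdivrMl ?oppr_gt0 //; lra.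
have t0 : t = 0 by apply/eqP; rewrite eq_le t_le0 t_ge0.
rewrite t0 mul0r addr0; apply: recession_bounded => i.
by have := y_t i; rewrite t0 mul0r addr0.
Qed.

Lemma lp_duality :
  exists v : 'rV_m, [/\ forall i, 0 <= v 0 i, v *m Gm = hv & dot v be <= al].
Proof.
pose M2 : 'M[R]_(m + 1, q + 1) := col_mx (row_mx Gm be) (row_mx 0 1).
have [v [v_ge0 vM2]] : exists v : 'rV_(m + 1),
    (forall i, 0 <= v 0 i) /\ v *m M2 = row_mx hv al%:M.
  apply: farkas_mx => z; rewrite -[z]vsubmxK [dsubmx z]mx11_scalar.
  set y := usubmx z; set t := dsubmx z 0 0 => z_le0.
  have M2z : M2 *m col_mx y t%:M = col_mx (Gm *m y + t *: be) t%:M.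
    by rewrite mul_col_mx !mul_row_col mul0mx add0r mul1mx mul_mx_scalar.
  rewrite /dot mul_row_col mul_mx_scalar mxE -/(dot hv y) !mxE mulr1n.
  apply: homogenized_bound.
    by have := z_le0 (rshift m 0); rewrite M2z col_mxEd mxE mulr1n.
  by move=> i; have := z_le0 (lshift 1 i); rewrite M2z col_mxEu !mxE mulrC.
move: vM2; rewrite -[v]hsubmxK mul_row_col !mul_mx_row add_row_mx.
case/eq_row_mx; rewrite mulmx0 addr0 mulmx1 => vGm /matrixP/(_ 0 0).
rewrite !mxE /= mulr1n => v_be.
exists (lsubmx v); split => //; first by move=> i; rewrite mxE.
by rewrite -v_be /dot mxE lerDl.
Qed.

End LPDuality.

Lemma ratio_test (R : realFieldType) (T : finType) (X Y : T -> R) :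
  (forall o, 0 <= X o) -> (forall o, 0 <= Y o) -> (exists o, 0 < Y o) ->
  exists t o1, [/\ 0 <= t, forall o, 0 <= X o - t * Y o, 0 < Y o1 & X o1 - t * Y o1 = 0].
Proof.
move=> X_ge0 Y_ge0 [o0 Y_o0].
have [o1 Y_o1 o1_min] := @arg_minP _ _ _ o0 (fun o => 0 < Y o) (fun o => X o / Y o) Y_o0.
exists (X o1 / Y o1), o1; split => //.
- by rewrite divr_ge0 // ltW.
- move=> o; have [Y_o | Y_o] := lerP (Y o) 0.
    have -> : Y o = 0 by apply/eqP; rewrite eq_le Y_o Y_ge0.
    by rewrite mulr0 subr0.
  by rewrite subr_ge0 -ler_pdivlMr // o1_min.
- by rewrite divfK ?subrr // gt_eqF.
Qed.

Section RayDecomposition.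
Variables (R : archiRealFieldType) (m q : nat) (G : 'M[rat]_(m, q)) (h : 'rV[rat]_q).
Variables (I : finType) (vr : I -> 'rV[R]_m * R).

Definition coord (w : 'rV[R]_m * R) (o : option 'I_m) : R :=
  if o is Some i then w.1 0 i else w.2.
Definition supp (w : 'rV[R]_m * R) : {set option 'I_m} := [set o | coord w o != 0].

Definition sub_mul (w : 'rV[R]_m * R) (t : R) (d : 'rV[R]_m * R) : 'rV[R]_m * R :=
  (w.1 - t *: d.1, w.2 - t * d.2).

Definition ray_comb (w : 'rV[R]_m * R) : Prop :=
  exists mu : I -> R, [/\ forall r, 0 <= mu r,
    w.1 = \sum_r mu r *: (vr r).1 & w.2 = \sum_r mu r * (vr r).2].

Lemma coord_sub_mul w t d o : coord (sub_mul w t d) o = coord w o - t * coord d o.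
Proof. by case: o => [i|] //=; rewrite !mxE. Qed.

Lemma inQ_coord_ge0 w : inQ G h w -> forall o, 0 <= coord w o.
Proof. by case=> _ [w1_ge0 w2_ge0] [i|] /=. Qed.

(* Q is the nonnegative part of a linear subspace, so it contains every
   nonnegative w - t d with w, d in Q. *)
Lemma inQ_sub_mul w t d : inQ G h w -> inQ G h d ->
  (forall o, 0 <= coord (sub_mul w t d) o) -> inQ G h (sub_mul w t d).
Proof.
move=> [/subr0_eq wGh _] [/subr0_eq dGh _] wtd_ge0; split; last first.
  by split=> [i|]; [exact: (wtd_ge0 (Some i)) | exact: (wtd_ge0 None)].
by rewrite /= mulmxBl -scalemxAl wGh dGh scalerA scalerBl subrr.
Qed.

Lemma supp_eq0 w : supp w = set0 -> w = (0, 0).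
Proof.
move=> /setP w_supp0; have w_coord0 o : coord w o = 0.
  by apply/eqP/negbNE; have := w_supp0 o; rewrite !inE => ->.
case: w {w_supp0} w_coord0 => w1 w2 w_coord0; congr pair; last exact: (w_coord0 None).
by apply/rowP => i; rewrite mxE; exact: (w_coord0 (Some i)).
Qed.

Lemma reduce_support w x y : inQ G h x -> inQ G h y -> y <> (0, 0) ->
  supp x \subset supp w -> supp y \subset supp w ->
  exists2 t, 0 <= t & inQ G h (sub_mul x t y) /\ supp (sub_mul x t y) \proper supp w.
Proof.
move=> x_in y_in y_neq0 x_supp y_supp.
have [o0 y_o0] : exists o, 0 < coord y o.
  have /set0Pn [o] : supp y != set0 by apply/eqP => /supp_eq0.
  by rewrite inE => y_o; exists o; rewrite lt_def y_o inQ_coord_ge0.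
have [t [o1 [t_ge0 xty_ge0 y_o1 xty_o1]]] :=
  ratio_test (inQ_coord_ge0 x_in) (inQ_coord_ge0 y_in) (ex_intro _ o0 y_o0).
exists t => //; split.
  by apply: inQ_sub_mul => // o; rewrite coord_sub_mul.
apply/properP; split.
  apply/subsetP => o; rewrite inE coord_sub_mul => xty_o.
  have [x_o | x_o] := eqVneq (coord x o) 0.
    by apply: (subsetP y_supp); rewrite inE; apply: contraNneq xty_o => ->; rewrite x_o mulr0 subr0.
  by apply: (subsetP x_supp); rewrite inE.
exists o1; first by apply: (subsetP y_supp); rewrite inE gt_eqF.
by rewrite inE coord_sub_mul xty_o1 eqxx.
Qed.

Lemma ray_comb0 : ray_comb (0, 0).
Proof.
by exists (fun _ => 0); split=> //=; rewrite big1 // => r _; rewrite ?scale0r ?mul0r.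
Qed.

Lemma ray_comb_ray r w : same_ray (vr r) w -> ray_comb w.
Proof.
case: w => w1 w2 [lam [lam_gt0 /= [-> ->]]]; exists (fun s => if s == r then lam else 0).
split=> [s||]; first by case: eqP => // _; exact: ltW.
  by rewrite (bigD1 r) //= eqxx big1 ?addr0 // => s /negbTE ->; rewrite scale0r.
by rewrite (bigD1 r) //= eqxx big1 ?addr0 // => s /negbTE ->; rewrite mul0r.
Qed.

Lemma ray_comb_add w e d t : ray_comb e -> ray_comb d -> 0 <= t ->
  w.1 = e.1 + t *: d.1 -> w.2 = e.2 + t * d.2 -> ray_comb w.
Proof.
case: w => w1 w2 [mu [mu_ge0 -> ->]] [nu [nu_ge0 -> ->]] t_ge0 /= -> ->.
exists (fun r => mu r + t * nu r); split=> [r||] /=.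
- by rewrite addr_ge0 // mulr_ge0.
- rewrite scaler_sumr -big_split; apply: eq_bigr => r _.
  by rewrite scalerDl scalerA.
- rewrite mulr_sumr -big_split; apply: eq_bigr => r _.
  by rewrite mulrDl mulrA.
Qed.

(* By induction on the support: a point that is neither 0 nor
   extreme splits as w = e + t d with e, d in Q of smaller support. *)
Lemma ray_decomposition :
  (forall w, extreme_ray_gen (inQ G h) w -> exists r, same_ray (vr r) w) ->
  forall w, inQ G h w -> ray_comb w.
Proof.
move=> all_rays w; move: {2}#|supp w| (leqnn #|supp w|) => k.
elim: k w => [|k IH] w w_supp w_in.
  have /supp_eq0 -> : supp w = set0 by apply/eqP; rewrite -cards_eq0 -leqn0.
  exact: ray_comb0.
have [-> | w_neq0] := classic (w = (0, 0)); first exact: ray_comb0.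
have [w_ext | w_not_ext] := classic (extreme_ray_gen (inQ G h) w).
  by have [r] := all_rays _ w_ext; apply: ray_comb_ray.
have [u [u' [u_in u'_in u_u' u_not_mul]]] : exists u u', [/\ inQ G h u, inQ G h u',
    u.1 + u'.1 = w.1 /\ u.2 + u'.2 = w.2 &
    ~ exists lam : R, 0 <= lam /\ u.1 = lam *: w.1 /\ u.2 = lam * w.2].
  apply: NNPP => no_split; apply: w_not_ext; split=> //; split=> // u u' u_in u'_in e1 e2.
  by apply: NNPP => not_mul; apply: no_split; exists u, u'.
have coord_w o : coord w o = coord u o + coord u' o.
  by case: u_u' => e1 e2; case: o => [i|] /=; [rewrite -e1 mxE | rewrite -e2].
have u_supp : supp u \subset supp w.
  apply/subsetP => o; rewrite !inE; apply: contraNneq => /eqP.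
  by rewrite coord_w paddr_eq0 ?(inQ_coord_ge0 u_in) ?(inQ_coord_ge0 u'_in) //; case/andP.
have [al al_ge0 [d_in d_supp]] := reduce_support u_in w_in w_neq0 u_supp (subxx _).
have d_neq0 : sub_mul u al w <> (0, 0).
  by case=> /subr0_eq u1 /subr0_eq u2; apply: u_not_mul; exists al.
have [t t_ge0 [e_in e_supp]] := reduce_support w_in d_in d_neq0 (subxx _) (proper_sub d_supp).
apply: (ray_comb_add (IH _ _ e_in) (IH _ _ d_in) t_ge0); rewrite /= ?subrK //.
  exact: leq_trans (proper_card e_supp) w_supp.
exact: leq_trans (proper_card d_supp) w_supp.
Qed.

End RayDecomposition.

Lemma weighted_sum_witness (R : realFieldType) (T : finType) (mu w f : T -> R) :
  (forall r, 0 <= mu r) -> (forall r, 0 <= w r) -> (forall r, w r = 0 -> 0 <= f r) ->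
  0 < \sum_r mu r * w r -> \sum_r mu r * f r <= 0 ->
  exists r, 0 < w r /\ f r <= 0.
Proof.
move=> mu_ge0 w_ge0 f_ge0_off sum_w_gt0 sum_f_le0.
apply: NNPP => no_r.
have f_gt0 r : 0 < w r -> 0 < f r.
  by move=> w_r_gt0; rewrite ltNge; apply/negP => f_r_le0; apply: no_r; exists r.
have muf_ge0 r : 0 <= mu r * f r.
  rewrite mulr_ge0 //; have [/f_gt0/ltW // | w_r_le0] := ltrP 0 (w r).
  by apply: f_ge0_off; apply/eqP; rewrite eq_le w_r_le0 w_ge0.
have [r muw_r_gt0] : exists r, 0 < mu r * w r.
  apply: NNPP => none; move: sum_w_gt0; rewrite ltNge => /negP; apply.
  by apply: sumr_le0 => r _; rewrite leNgt; apply/negP => ?; apply: none; exists r.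
have mu_r_gt0 : 0 < mu r.
  by rewrite lt_def mu_ge0 andbT; apply: contraTneq muw_r_gt0 => ->; rewrite mul0r ltxx.
have w_r_gt0 : 0 < w r by rewrite -(pmulr_rgt0 _ mu_r_gt0).
move: sum_f_le0; apply/negP; rewrite -ltNge (bigD1 r) //=.
rewrite ltr_pwDl ?mulr_gt0 ?f_gt0 //.
by apply: sumr_ge0 => i _; exact: muf_ge0.
Qed.

Section CuttingPlane.
Variables (R : archiRealFieldType) (m p q : nat).
Variables (A : 'M[rat]_(m, p)) (G : 'M[rat]_(m, q)) (b : 'cV[rat]_m).
Variables (c : 'rV[rat]_p) (h : 'rV[rat]_q) (gs : rat).
Variables (I : finType) (vr : I -> 'rV[R]_m * R).

Lemma ratmxE k n (M : 'M[rat]_(k, n)) i j : (ratmx M : 'M[R]_(k, n)) i j = ratr (M i j).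
Proof. by rewrite mxE. Qed.

Lemma inP_stacked (x : 'cV[R]_p) (y : 'cV[R]_q) :
  inP A G b (x, y) <-> in_poly (row_mx (ratmx A) (ratmx G)) (ratmx b) (col_mx x y).
Proof.
by rewrite /inP /in_poly /= mul_row_col; split=> z_in i; have := z_in i; rewrite ?ratmxE.
Qed.

Lemma inP_slice (x : 'cV[R]_p) (y : 'cV[R]_q) :
  inP A G b (x, y) <-> in_poly (ratmx G) (ratmx b - ratmx A *m x) y.
Proof.
by rewrite /inP /in_poly /=; split=> z_in i; have := z_in i; rewrite !mxE lerBrDl.
Qed.

Lemma bounded_dual_feasible :
  (exists z : 'cV[R]_p * 'cV[R]_q, inP A G b z) ->
  (exists M : R, valid (inP A G b) c h M) ->
  exists2 v : 'rV[R]_m, (forall i, 0 <= v 0 i) & v *m ratmx G = ratmx h.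
Proof.
move=> [[x0 y0] /inP_stacked z0_in] [M P_bounded].
have [||v [v_ge0 vAG _]] := lp_duality (Gm := row_mx (ratmx A) (ratmx G)) (be := ratmx b)
  (hv := row_mx (ratmx c) (ratmx h)) (al := M).
- by exists (col_mx x0 y0); exact: z0_in.
- move=> z; rewrite -[z]vsubmxK => /inP_stacked /P_bounded.
  by rewrite /dot mul_row_col mxE.
- by exists v => //; move: vAG; rewrite mul_mx_row => /eq_row_mx [].
Qed.

Lemma inQ_lift (v : 'rV[R]_m) : (forall i, 0 <= v 0 i) -> v *m ratmx G = ratmx h ->
  inQ G h (v, 1 : R).
Proof. by move=> v_ge0 vG; split; [rewrite /= scale1r vG subrr | split]. Qed.

Lemma inQ_dual_bound (v : 'rV[R]_m * R) be y : inQ G h v -> in_poly (ratmx G) be y ->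
  v.2 * dot (ratmx h) y <= dot v.1 be.
Proof.
case=> /subr0_eq vGh [v1_ge0 _] y_in.
have -> : v.2 * dot (ratmx h) y = dot v.1 (ratmx G *m y) by rewrite -dotZ -vGh /dot mulmxA.
rewrite -subr_ge0 -dotBr /dot mxE sumr_ge0 // => i _.
by apply: mulr_ge0 => //; have := y_in i; rewrite !mxE; lra.
Qed.

Lemma dot_dvec (v : 'rV[R]_m * R) (x : 'cV[R]_p) :
  dot (dvec A c v) x = dot v.1 (ratmx A *m x) - v.2 * dot (ratmx c) x.
Proof. by rewrite /dvec dotB dotZ /dot mulmxA. Qed.

(* The disjunctive cut of a ray r with v_{m+1} > 0: every mixed-integer
   point with d^r x >= v_{1..m} b - v_{m+1} gamma* satisfies
   c x + h y <= gamma^r, because d^r x is an integer, hence >= delta^r. *)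
Lemma ray_cut_valid (v : 'rV[R]_m * R) x y : inQ G h v -> 0 < v.2 ->
  (forall j, dvec A c v 0 j \is a Num.int) -> inPZ A G b (x, y) ->
  dot v.1 (ratmx b) - v.2 * ratr gs <= dot (dvec A c v) x ->
  obj c h (x, y) <= gammar b gs v.
Proof.
move=> v_in v2_gt0 d_int [/inP_slice y_in x_int] d_x.
have dx_int : dot (dvec A c v) x \is a Num.int.
  by rewrite /dot mxE rpred_sum // => j _; rewrite rpredM.
have delta_le : delta b gs v <= dot (dvec A c v) x.
  by rewrite /delta -(ceilK dx_int) ler_int le_ceil.
have := inQ_dual_bound v_in y_in; rewrite dotBr.
move: delta_le; rewrite dot_dvec /gammar /obj /= invrN mulrN -mulNr opprB ler_pdivlMr //.
rewrite -!/(dot _ _); nra.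
Qed.

(* Rounding up delta^r makes every gamma^r with v_{m+1} > 0 at most gamma*,
   so the new inequality is at least as strong as the old one. *)
Lemma gammar_le_gs (v : 'rV[R]_m * R) : 0 < v.2 -> gammar b gs v <= ratr gs.
Proof.
move=> v2_gt0; rewrite /gammar /delta invrN mulrN -mulNr opprB ler_pdivrMr //.
have := ceil_ge ((v.1 *m ratmx b) 0 0 - v.2 * ratr gs); lra.
Qed.

Lemma valid_PZ_PI (g : R) : valid (inPZ A G b) c h g -> valid (inPI A G b) c h g.
Proof.
move=> PZ_g [x y] [n [pts [lam [pts_in [lam_ge0 [lam_sum [/= -> ->]]]]]]].
rewrite /obj /= !mulmx_sumr !summxE -big_split /=.
rewrite -[g]mul1r -lam_sum mulr_suml; apply: ler_sum => k _.
rewrite -!scalemxAr !mxE -mulrDr ler_wpM2l //.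
by have := PZ_g _ (pts_in k); rewrite /obj !mxE.
Qed.

Lemma PZ_sub_PI (z : 'cV[R]_p * 'cV[R]_q) : inPZ A G b z -> inPI A G b z.
Proof.
move=> z_in; exists 1%N, (fun _ => z), (fun _ => 1).
by rewrite !big_ord1 !scale1r; split=> //; split=> // _; exact: ler01.
Qed.

Hypothesis vr_in : forall r, inQ G h (vr r).
Hypothesis decomp : forall w, inQ G h w -> ray_comb vr w.

Lemma ray_comb_pairing (mu : I -> R) (w : 'rV[R]_m * R) be al :
  w.1 = \sum_r mu r *: (vr r).1 -> w.2 = \sum_r mu r * (vr r).2 ->
  \sum_r mu r * (dot (vr r).1 be - (vr r).2 * al) = dot w.1 be - w.2 * al.
Proof.
move=> -> ->; rewrite /dot mulmx_suml summxE mulr_suml -sumrB.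
by apply: eq_bigr => r _; rewrite -scalemxAl [in RHS]mxE mulrBr mulrA.
Qed.

Lemma exists_pos_ray (w : 'rV[R]_m * R) : inQ G h w -> 0 < w.2 ->
  exists r, 0 < (vr r).2.
Proof.
move=> /decomp [mu [mu_ge0 _ ->]] w2_gt0.
have [|r [r_pos _]] := weighted_sum_witness (f := fun _ => 0) mu_ge0
  (fun r => (vr_in r).2.2) (fun _ _ => lexx 0) w2_gt0; last by exists r.
by rewrite big1 // => r _; rewrite mulr0.
Qed.

(* The key step: above a mixed-integer point (x, y), LP duality on the
   slice of P at x yields a point (v, 1) of Q whose pairing with
   (b - A x, gamma* - c x) is <= 0; decomposing (v, 1) into the chosen rays,
   one ray with v_{m+1} > 0 inherits this, i.e. it satisfies
   d^r x >= v_{1..m} b - v_{m+1} gamma*. *)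
Lemma good_ray (x : 'cV[R]_p) (y : 'cV[R]_q) :
  inPZ A G b (x, y) -> valid (inPZ A G b) c h (ratr gs : R) ->
  exists r, 0 < (vr r).2 /\
    dot (vr r).1 (ratmx b) - (vr r).2 * ratr gs <= dot (dvec A c (vr r)) x.
Proof.
move=> [/inP_slice y_in x_int] PZ_gs.
pose be := ratmx b - ratmx A *m x; pose al := ratr gs - dot (ratmx c) x.
have [||v [v_ge0 vG v_be]] := lp_duality (Gm := ratmx G) (be := be)
    (hv := ratmx h) (al := al); first by exists y.
  move=> y' /inP_slice y'_in; have := PZ_gs (x, y') (conj y'_in x_int).
  by rewrite /obj /al /dot /=; lra.
have [mu [mu_ge0 v1_eq v2_eq]] := decomp (inQ_lift v_ge0 vG).
have [|||r [r_pos r_le0]] := weighted_sum_witness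
  (f := fun r => dot (vr r).1 be - (vr r).2 * al) mu_ge0 (fun r => (vr_in r).2.2).
- move=> r r2_eq0 /=; have := inQ_dual_bound (vr_in r) y_in.
  by rewrite r2_eq0 !mul0r subr0.
- by rewrite -v2_eq ltr01.
- by rewrite (ray_comb_pairing be al v1_eq v2_eq) /= mul1r subr_le0.
exists r; split => //; move: r_le0.
by rewrite /= dot_dvec /be /al dotBr; lra.
Qed.

End CuttingPlane.

Unset Implicit Arguments. Set Strict Implicit.

(* Theorem 3.1: c x + h y <= gamma-hat is a cutting plane for P. *)

Theorem theorem3p1 (R : archiRealFieldType) (m p q : nat)
  (A : 'M[rat]_(m, p)) (G : 'M[rat]_(m, q)) (b : 'cV[rat]_m)
  (c : 'rV[rat]_p) (h : 'rV[rat]_q) (gs : rat)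
  (I : finType) (vr : I -> 'rV[R]_m * R) :
  (exists z : 'cV[R]_p * 'cV[R]_q, inP A G b z) ->
  (exists M : R, valid (inP A G b) c h M) ->
  valid (inPI A G b) c h (ratr gs : R) ->
  ~ valid (inP A G b) c h (ratr gs : R) ->
  (forall r, extreme_ray_gen (inQ G h) (vr r)) ->
  (forall r s, same_ray (vr r) (vr s) -> r = s) ->
  (forall w, extreme_ray_gen (inQ G h) w -> exists r, same_ray (vr r) w) ->
  (forall r (j : 'I_p), dvec A c (vr r) 0 j \is a Num.int) ->
  (exists r, 0 < (vr r).2) /\
  (forall gh : R,
     (exists r, 0 < (vr r).2 /\ gh = gammar b gs (vr r)) ->
     (forall r, 0 < (vr r).2 -> gammar b gs (vr r) <= gh) ->
     valid (inPI A G b) c h gh /\ ~ valid (inP A G b) c h gh).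
Proof.
move=> P_nonempty P_bounded PI_gs P_not_gs vr_ext _ all_rays d_int.
have vr_in r : inQ G h (vr r) by case: (vr_ext r).
have decomp := ray_decomposition all_rays.
have PZ_gs : valid (inPZ A G b) c h (ratr gs : R).
  by move=> z /PZ_sub_PI /PI_gs.
split.
  have [v v_ge0 vG] := bounded_dual_feasible P_nonempty P_bounded.
  apply: (exists_pos_ray vr_in decomp (inQ_lift v_ge0 vG)) => /=; exact: ltr01.
move=> gh [r0 [r0_pos ->]] gammar_max; split.
  apply: valid_PZ_PI => -[x y] xy_in.
  have [r [r_pos r_cut]] := good_ray vr_in decomp xy_in PZ_gs.
  exact: le_trans (ray_cut_valid (vr_in r) r_pos (d_int r) xy_in r_cut) (gammar_max r r_pos).
move=> P_gh; apply: P_not_gs => z z_in.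
exact: le_trans (P_gh z z_in) (gammar_le_gs b gs r0_pos).
Qed.
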